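(* Let $\mathcal{L}$ be a Lindbladian on $\mathbb{C}^d$, let $(\pi_t)_{t\ge0}$ be program states on a finite-dimensional space $\mathcal{H}_P$ such that $t\mapsto\pi_t$ is real-analytic on $[0,\infty)$, and let $\mathcal{P}$ be a linear map from operators on $\mathbb{C}^d\otimes\mathcal{H}_P$ to operators on $\mathbb{C}^d$ such that $\mathcal{P}(\cdot\otimes\pi_t)=e^{t\mathcal{L}}$ for all $t\in[0,T]$, for some $T>0$. Then $\mathcal{P}(\cdot\otimes\pi_t)=e^{t\mathcal{L}}$ also holds for every $t\ge T$.
   Context: A Lindbladian has GKSL form $\mathcal{L}(\rho)=-i[H,\rho]+\sum_j\gamma_j(L_j\rho L_j^\dagger-\frac12\{L_j^\dagger L_j,\rho\})$ and generates the semigroup $(e^{t\mathcal{L}})_{t\ge0}$. *)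

From HB Require Import structures.
From mathcomp Require Import all_boot all_order all_algebra.
From mathcomp Require Import all_classical all_reals all_analysis.
From mathcomp Require Import complex mxtens.
Set Implicit Arguments. Unset Strict Implicit. Unset Printing Implicit Defensive.
Import Order.TTheory GRing.Theory Num.Theory.
Import numFieldTopology.Exports numFieldNormedType.Exports.
Local Open Scope ring_scope.
Local Open Scope complex_scope.
Local Open Scope classical_set_scope.

Section Defs.
Variable R : realType.
Local Notation C := R[i].

Definition adjm m n (A : 'M[C]_(m, n)) : 'M[C]_(n, m) := (map_mx Num.conj A)^T.

Definition hermitian n (A : 'M[C]_n) : Prop := adjm A = A.

Definition psd n (A : 'M[C]_n) : Prop :=
  hermitian A /\ forall v : 'cV[C]_n, 0 <= (adjm v *m A *m v) 0 0.

Definition density n (A : 'M[C]_n) : Prop := psd A /\ \tr A = 1.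

Definition is_lindbladian d (L : 'M[C]_d -> 'M[C]_d) : Prop :=
  exists H : 'M[C]_d, hermitian H /\
  exists (k : nat) (g : 'I_k -> R) (Ls : 'I_k -> 'M[C]_d),
    (forall j, 0 <= g j) /\
    forall rho : 'M[C]_d,
      L rho = - (Complex 0 1) *: (H *m rho - rho *m H)
              + \sum_(j < k) (g j)%:C *:
                  (Ls j *m rho *m adjm (Ls j)
                   - (2%:R)^-1 *: (adjm (Ls j) *m Ls j *m rho
                                   + rho *m (adjm (Ls j) *m Ls j))).

Definition mx_lim m n (u : nat -> 'M[C]_(m, n)) : 'M[C]_(m, n) :=
  \matrix_(i, j) Complex (limn (fun k => complex.Re (u k i j)))
                         (limn (fun k => complex.Im (u k i j))).

Definition expL d (t : R) (L : 'M[C]_d -> 'M[C]_d) (rho : 'M[C]_d) : 'M[C]_d :=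
  mx_lim (fun N => \sum_(k < N) ((t ^+ k / (k`!)%:R)%:C *: iter k L rho)).

Definition real_analytic_on_nonneg (f : R -> R) : Prop :=
  forall t0 : R, 0 <= t0 ->
    exists r : R, 0 < r /\ exists a : nat -> R,
      forall t : R, 0 <= t -> `|t - t0| < r ->
        (fun N => \sum_(k < N) a k * (t - t0) ^+ k) @ \oo --> f t.

Definition mx_real_analytic_on_nonneg m n (f : R -> 'M[C]_(m, n)) : Prop :=
  forall i j, real_analytic_on_nonneg (fun t => complex.Re (f t i j)) /\
              real_analytic_on_nonneg (fun t => complex.Im (f t i j)).

End Defs.

(* Entry by entry, both sides are real-analytic functions of t on [0, +oo):
   P (rho *t pi t) because P is linear and pi is analytic, and expL t L rho
   because L is a bounded linear map, so that around any t0 the exponential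
   series re-expands as the exponential series of L started at expL t0 L rho
   (the semigroup law).  Their difference vanishes on [0, T], hence everywhere
   by the identity theorem on the half-line, which is proved by connectedness:
   if the function did not vanish identically, the supremum S of the s such
   that it vanishes on [0, s] would be finite, but the expansion at S vanishes
   on the left of S, hence has zero coefficients, hence the function vanishes
   on a neighbourhood of S. *)

From HB Require Import structures.
From mathcomp Require Import all_boot all_order all_algebra.
From mathcomp Require Import all_classical all_reals all_analysis.
From mathcomp Require Import complex mxtens.
From mathcomp Require Import ring lra.
Import Order.TTheory GRing.Theory Num.Theory.
Import numFieldTopology.Exports numFieldNormedType.Exports.
Set Implicit Arguments. Unset Strict Implicit. Unset Printing Implicit Defensive.
Local Open Scope ring_scope.
Local Open Scope classical_set_scope.
Local Open Scope complex_scope.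

Section RealAnalytic.
Variable R : realType.
Implicit Types (f g h : R -> R) (a : nat -> R).

Lemma real_analytic0 : real_analytic_on_nonneg (fun _ : R => 0).
Proof.
move=> t0 _; exists 1; split => //; exists (fun _ => 0) => t _ _ /=.
under eq_cvg do rewrite (eq_bigr _ (fun k _ => mul0r _)) big1_eq.
exact: cvg_cst.
Qed.

Lemma real_analyticD f g :
  real_analytic_on_nonneg f -> real_analytic_on_nonneg g ->
  real_analytic_on_nonneg (fun t => f t + g t).
Proof.
move=> fa ga t0 t0_ge0.
have [r1 [r1_gt0 [a1 f_cvg]]] := fa t0 t0_ge0.
have [r2 [r2_gt0 [a2 g_cvg]]] := ga t0 t0_ge0.
exists (Num.min r1 r2); split; first by rewrite lt_min r1_gt0.
exists (fun k => a1 k + a2 k) => t t_ge0; rewrite lt_min => /andP[tr1 tr2].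
under eq_cvg do rewrite (eq_bigr _ (fun k _ => mulrDl _ _ _)) big_split /=.
exact: cvgD (f_cvg t t_ge0 tr1) (g_cvg t t_ge0 tr2).
Qed.

Lemma real_analyticMl (c : R) f :
  real_analytic_on_nonneg f -> real_analytic_on_nonneg (fun t => c * f t).
Proof.
move=> fa t0 t0_ge0; have [r [r_gt0 [a f_cvg]]] := fa t0 t0_ge0.
exists r; split => //; exists (fun k => c * a k) => t t_ge0 tr.
under eq_cvg do rewrite (eq_bigr _ (fun k _ => esym (mulrA _ _ _))) -mulr_sumr.
exact: cvgMr (f_cvg t t_ge0 tr).
Qed.

Lemma real_analytic_sum (I : Type) (s : seq I) (F : I -> R -> R) :
  (forall i, real_analytic_on_nonneg (F i)) ->
  real_analytic_on_nonneg (fun t => \sum_(i <- s) F i t).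
Proof.
move=> Fa; elim: s => [|i s IH].
  by under eq_fun do rewrite big_nil; exact: real_analytic0.
by under eq_fun do rewrite big_cons; exact: real_analyticD.
Qed.

Lemma real_analyticB f g :
  real_analytic_on_nonneg f -> real_analytic_on_nonneg g ->
  real_analytic_on_nonneg (fun t => f t - g t).
Proof.
move=> fa ga; under eq_fun do rewrite -mulN1r.
by apply: real_analyticD => //; exact: real_analyticMl.
Qed.

Lemma pseries_coef_bounded a x :
  cvgn (fun N => \sum_(k < N) a k * x ^+ k) ->
  exists M, forall k, `|a k| * `|x| ^+ k <= M.
Proof.
rewrite (_ : (fun N => _) = series (fun k => a k * x ^+ k)); last by rewrite seriesEord.
move/cvg_series_cvg_0/cvgP/cvg_has_ub => [M ubM].
by exists M => k; rewrite -normrX -normrM; apply: ubM; exists k.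
Qed.

Lemma sum_expr_le2 (q : R) n : 0 <= q <= 2^-1 -> \sum_(i < n) q ^+ i <= 2.
Proof.
case/andP=> q_ge0 q_le.
apply: (@le_trans _ _ (series (geometric 1 2^-1) n)).
  by rewrite seriesEord /=; apply: ler_sum => i _; rewrite mul1r lerXn2r // nnegrE.
apply: le_trans (geometric_le_lim _ _ _ _) _ => //; first by rewrite ger0_norm // invf_lt1 // ltr1n.
by rewrite mul1r (_ : 1 - 2^-1 = 2^-1 :> R) ?invrK //; field.
Qed.

Lemma pseries_tail_le a (M rho x : R) m n :
  0 < rho -> (forall k, `|a k| * rho ^+ k <= M) -> `|x| <= rho / 2 ->
  `|\sum_(i < n) a (m + i)%N * x ^+ (m + i)| <= 2 * M * (`|x| / rho) ^+ m.
Proof.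
move=> rho_gt0 aM x_le; set q := `|x| / rho.
have q_ge0 : 0 <= q := divr_ge0 (normr_ge0 x) (ltW rho_gt0).
have term_le k : `|a k * x ^+ k| <= M * q ^+ k.
  rewrite normrM normrX /q expr_div_n mulrA ler_pdivlMr ?exprn_gt0 //.
  by rewrite mulrAC ler_wpM2r ?exprn_ge0.
apply: le_trans (ler_norm_sum _ _ _) _.
apply: le_trans (ler_sum _ (fun i _ => term_le _)) _.
under eq_bigr do rewrite exprD mulrA.
have M_ge0 : 0 <= M := le_trans (mulr_ge0 (normr_ge0 _) (exprn_ge0 _ (ltW rho_gt0))) (aM 0%N).
rewrite -mulr_sumr (_ : 2 * M * _ = M * q ^+ m * 2); last by ring.
apply: ler_wpM2l; first by rewrite mulr_ge0 ?exprn_ge0.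
apply: sum_expr_le2; rewrite q_ge0 /q ler_pdivrMr //; lra.
Qed.

(* Strong induction on k: once the lower coefficients vanish, the partial sums
   at [- y] are [a k * (- y) ^+ k] plus a tail of order [y ^+ k.+1], whence
   [|a k| <= C * y] for all small [y > 0]. *)
Lemma pseries_eq0_left a (r : R) : 0 < r ->
  (forall y, 0 < y -> y < r -> \sum_(k < N) a k * (- y) ^+ k @[N --> \oo] --> 0) ->
  forall k, a k = 0.
Proof.
move=> r_gt0 a_cvg0; set rho := r / 2.
have rho_gt0 : 0 < rho by rewrite divr_gt0.
have rho_lt_r : rho < r by rewrite /rho; lra.
have [M aM] := pseries_coef_bounded (cvgP _ (a_cvg0 rho rho_gt0 rho_lt_r)).
rewrite normrN gtr0_norm // in aM.
elim/ltn_ind => k IH.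
have key y : 0 < y -> y <= rho / 2 -> `|a k| * y ^+ k <= 2 * M * (y / rho) ^+ k.+1.
  move=> y_gt0 y_le; have y_lt_r : y < r by rewrite /rho in y_le; lra.
  have Ny_le : `|- y| <= rho / 2 by rewrite normrN gtr0_norm.
  have := a_cvg0 y y_gt0 y_lt_r; rewrite -(cvg_shiftn k.+1) => /cvg_norm.
  rewrite normr0 -subr_le0 => /cvgr_to_ge; apply; apply: nearW => n /=.
  rewrite addnC big_split_ord /= big_ord_recr /= big1 ?add0r => [|i _]; last first.
    by rewrite IH ?mul0r.
  set tail := \sum_(i < n) _.
  have := pseries_tail_le k.+1 n rho_gt0 aM Ny_le; rewrite -/tail normrN (gtr0_norm y_gt0).
  have := ler_normD (a k * (- y) ^+ k + tail) (- tail).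
  by rewrite addrK normrN normrM normrX normrN (gtr0_norm y_gt0); lra.
have lin_cvg : (2 * M / rho ^+ k.+1) * y @[y --> 0^'+] --> 0.
  rewrite -[X in _ --> X](mulr0 (2 * M / rho ^+ k.+1)); apply: cvgMr.
  exact: cvg_at_right_filter cvg_id.
apply/eqP; rewrite -normr_eq0 eq_le normr_ge0 andbT.
apply: (cvgr_to_ge lin_cvg); near=> y.
have y_gt0 : 0 < y by near: y; exact: nbhs_right_gt.
have y_le : y <= rho / 2 by near: y; apply: nbhs_right_le; rewrite divr_gt0.
have := key y y_gt0 y_le.
rewrite (_ : 2 * M * _ = 2 * M / rho ^+ k.+1 * y * y ^+ k); last first.
  by rewrite expr_div_n exprSr; ring.
by rewrite ler_pM2r // exprn_gt0.
Unshelve. all: by end_near.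
Qed.

Lemma real_analytic_eq0 h (T : R) :
  real_analytic_on_nonneg h -> 0 < T ->
  (forall t, 0 <= t -> t <= T -> h t = 0) -> forall t, 0 <= t -> h t = 0.
Proof.
move=> ha T_gt0 hT t t_ge0; apply: contrapT => ht.
pose A := [set s | 0 <= s /\ forall u, 0 <= u -> u <= s -> h u = 0].
have A_lt s : A s -> s < t.
  by case=> _ hs; case: ltP => // st; case: ht; exact: hs.
have AT : A T by split; [exact: ltW | exact: hT].
have supA : has_sup A by split; [exists T | exists t => s /A_lt/ltW].
set S := sup A.
have S_gt0 : 0 < S := lt_le_trans T_gt0 (sup_upper_bound supA AT).
have h_below u : 0 <= u -> u < S -> h u = 0.
  move=> u_ge0 uS; have Su : 0 < S - u by rewrite subr_gt0.
  have [s [_ hs] us] := @sup_adherent _ A _ Su supA.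
  by apply: hs => //; rewrite -/S in us; lra.
have [r [r_gt0 [a h_cvg]]] := ha S (ltW S_gt0).
have a0 k : a k = 0.
  apply: (@pseries_eq0_left _ (Num.min r S)) => [|y y_gt0]; first by rewrite lt_min r_gt0.
  rewrite lt_min => /andP[yr yS].
  have Sy_ge0 : 0 <= S - y by lra.
  have Sy_near : `|S - y - S| < r by rewrite addrAC subrr add0r normrN gtr0_norm.
  have := h_cvg (S - y) Sy_ge0 Sy_near.
  by rewrite h_below 1?addrAC ?subrr ?add0r //; lra.
move: h_cvg; rewrite (funext a0) => h_cvg.
have h_above u : S <= u -> u < S + r -> h u = 0.
  move=> Su uSr; have u_near : `|u - S| < r by rewrite ger0_norm ?subr_ge0 //; lra.
  have := h_cvg u (le_trans (ltW S_gt0) Su) u_near.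
  under eq_cvg do rewrite (eq_bigr _ (fun k _ => mul0r _)) big1_eq.
  by move=> h_lim; exact: esym (cvg_unique _ (cvg_cst 0) h_lim).
have : A (S + r / 2).
  split => [|u u_ge0 uSr]; first lra.
  by case: (ltP u S) => [uS|Su]; [exact: h_below | apply: h_above => //; lra].
by move/(sup_upper_bound supA); rewrite -/S; lra.
Qed.

End RealAnalytic.

Section ComplexMatrices.
Variable R : realType.
Implicit Types (b : bool) (z w c : R[i]) (f g : R -> R[i]).

(* [reim true] is the real part and [reim false] the imaginary part; indexing
   them by a boolean lets every argument on real coordinates be made once. *)
Definition reim b z : R := if b then complex.Re z else complex.Im z.

Lemma reimD b : {morph reim b : z w / z + w}.
Proof. by case: b => -[? ?] [? ?]. Qed.

Lemma reimN b : {morph reim b : z / - z}.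
Proof. by case: b => -[? ?]. Qed.

Lemma reimB b z w : reim b (z - w) = reim b z - reim b w.
Proof. by rewrite reimD reimN. Qed.

Lemma reim_sum b (I : Type) (s : seq I) (F : I -> R[i]) :
  reim b (\sum_(i <- s) F i) = \sum_(i <- s) reim b (F i).
Proof. by apply: (big_morph _ (reimD b)); case: b. Qed.

Lemma reim_realMl b (r : R) z : reim b (r%:C * z) = r * reim b z.
Proof. by case: b; case: z => x y /=; rewrite mul0r ?subr0 ?addr0. Qed.

Lemma eq_complex_reim z w : (forall b, reim b z = reim b w) -> z = w.
Proof. by case: z w => [x y] [x' y'] e; congr Complex; [exact: e true | exact: e false]. Qed.

Definition real_analytic_cplx f : Prop :=
  forall b, real_analytic_on_nonneg (fun t => reim b (f t)).

Lemma mx_real_analytic_entry m n (F : R -> 'M[R[i]]_(m, n)) i j :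
  mx_real_analytic_on_nonneg F -> real_analytic_cplx (fun t => F t i j).
Proof. by move=> Fa [|]; [exact: (Fa i j).1 | exact: (Fa i j).2]. Qed.

Lemma real_analytic_cplxB f g :
  real_analytic_cplx f -> real_analytic_cplx g -> real_analytic_cplx (fun t => f t - g t).
Proof.
by move=> fa ga b; under eq_fun do rewrite reimB; exact: real_analyticB.
Qed.

Lemma real_analytic_cplx_sum (I : Type) (s : seq I) (F : I -> R -> R[i]) :
  (forall i, real_analytic_cplx (F i)) ->
  real_analytic_cplx (fun t => \sum_(i <- s) F i t).
Proof.
move=> Fa b; have := real_analytic_sum s (fun i => Fa i b).
by congr real_analytic_on_nonneg; apply/funext => t; rewrite reim_sum.
Qed.

Lemma real_analytic_cplxMr f c :
  real_analytic_cplx f -> real_analytic_cplx (fun t => f t * c).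
Proof.
move=> fa b; have -> : (fun t => reim b (f t * c)) = (fun t =>
    reim b c * reim true (f t) + (if b then - complex.Im c else complex.Re c) * reim false (f t)).
  by apply/funext => t; case: b; case: (f t) => x y; case: c => u v /=; ring.
by apply: real_analyticD; apply: real_analyticMl; [exact: fa true | exact: fa false].
Qed.

Lemma real_analytic_cplx_eq0 f (T : R) :
  real_analytic_cplx f -> 0 < T ->
  (forall t, 0 <= t -> t <= T -> f t = 0) -> forall t, 0 <= t -> f t = 0.
Proof.
move=> fa T_gt0 fT t t_ge0; apply: eq_complex_reim => b.
rewrite (real_analytic_eq0 (fa b) T_gt0) //; first by case: b.
by move=> u u_ge0 uT; rewrite fT //; case: b.
Qed.

Definition cnorm1 z : R := `|complex.Re z| + `|complex.Im z|.

Lemma cnorm1_ge0 z : 0 <= cnorm1 z.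
Proof. by rewrite addr_ge0. Qed.

Lemma cnorm1N z : cnorm1 (- z) = cnorm1 z.
Proof. by case: z => x y; rewrite /cnorm1 /= !normrN. Qed.

Lemma cnorm1D z w : cnorm1 (z + w) <= cnorm1 z + cnorm1 w.
Proof.
case: z w => [x y] [x' y']; rewrite /cnorm1 /=.
by have := ler_normD x x'; have := ler_normD y y'; lra.
Qed.

Lemma cnorm1M z w : cnorm1 (z * w) <= cnorm1 z * cnorm1 w.
Proof.
case: z w => [x y] [x' y']; rewrite /cnorm1 /=.
have := ler_normB (x * x') (y * y'); have := ler_normD (x * y') (y * x').
rewrite !normrM.
by have := normr_ge0 x; have := normr_ge0 y; have := normr_ge0 x'; have := normr_ge0 y'; nra.
Qed.

Lemma cnorm1_real (r : R) : cnorm1 r%:C = `|r|.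
Proof. by rewrite /cnorm1 /= normr0 addr0. Qed.

Lemma reim_le_cnorm1 b z : `|reim b z| <= cnorm1 z.
Proof. by case: b; rewrite /cnorm1 ?lerDl ?lerDr. Qed.

Lemma le_sum2_term m n (F : 'I_m -> 'I_n -> R) i j :
  (forall i j, 0 <= F i j) -> F i j <= \sum_i \sum_j F i j.
Proof.
move=> F_ge0; rewrite (bigD1 i) //= (bigD1 j) //= -addrA lerDl.
by rewrite addr_ge0 ?sumr_ge0 // => k _; rewrite sumr_ge0.
Qed.

Lemma squeeze_cvgr0 (u w : nat -> R) :
  (forall n, 0 <= u n <= w n) -> w n @[n --> \oo] --> 0 -> u n @[n --> \oo] --> 0.
Proof. by move=> uw; apply: squeeze_cvgr (cvg_cst 0); exact: nearW. Qed.

Definition mxnorm1 m n (X : 'M[R[i]]_(m, n)) : R := \sum_i \sum_j cnorm1 (X i j).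

Section MatrixNorm.
Variables m n : nat.
Implicit Types X Y : 'M[R[i]]_(m, n).

Lemma mxnorm1_ge0 X : 0 <= mxnorm1 X.
Proof. by rewrite sumr_ge0 // => i _; rewrite sumr_ge0 // => j _; exact: cnorm1_ge0. Qed.

Lemma mxnorm1D X Y : mxnorm1 (X + Y) <= mxnorm1 X + mxnorm1 Y.
Proof.
rewrite -big_split ler_sum // => i _; rewrite -big_split ler_sum // => j _.
by rewrite mxE cnorm1D.
Qed.

Lemma mxnorm1_sum (I : Type) (s : seq I) (F : I -> 'M[R[i]]_(m, n)) :
  mxnorm1 (\sum_(i <- s) F i) <= \sum_(i <- s) mxnorm1 (F i).
Proof.
elim: s => [|i s IH]; last by rewrite !big_cons (le_trans (mxnorm1D _ _)) ?lerD2l.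
rewrite !big_nil /mxnorm1 big1 // => i _.
by rewrite big1 // => j _; rewrite mxE /cnorm1 normr0 addr0.
Qed.

Lemma mxnorm1Z c X : mxnorm1 (c *: X) <= cnorm1 c * mxnorm1 X.
Proof.
rewrite mulr_sumr ler_sum // => i _; rewrite mulr_sumr ler_sum // => j _.
by rewrite mxE cnorm1M.
Qed.

Lemma mxnorm1B X Y : mxnorm1 (X - Y) = mxnorm1 (Y - X).
Proof.
apply: eq_bigr => i _; apply: eq_bigr => j _.
by rewrite !mxE -opprB cnorm1N.
Qed.

Lemma reim_le_mxnorm1 b X i j : `|reim b (X i j)| <= mxnorm1 X.
Proof.
apply: le_trans (reim_le_cnorm1 b _) _.
by apply: (@le_sum2_term _ _ (fun i j => cnorm1 (X i j))) => ? ?; exact: cnorm1_ge0.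
Qed.

Lemma mxnorm1_cvg0 (U : nat -> 'M[R[i]]_(m, n)) :
  (forall b i j, reim b (U N i j) @[N --> \oo] --> 0) -> mxnorm1 (U N) @[N --> \oo] --> 0.
Proof.
move=> U_cvg.
have -> : 0 = \sum_(i < m) \sum_(j < n) (`|0 : R| + `|0 : R|).
  by rewrite big1 // => i _; rewrite big1 // normr0 addr0.
apply: cvg_big => [|i _]; first exact: add_continuous.
apply: cvg_big => [|j _]; first exact: add_continuous.
by apply: cvgD; [exact: cvg_norm (U_cvg true i j) | exact: cvg_norm (U_cvg false i j)].
Qed.

Lemma reim_cvg_mxnorm1 (U : nat -> 'M[R[i]]_(m, n)) V b i j :
  mxnorm1 (U N - V) @[N --> \oo] --> 0 -> reim b (U N i j) @[N --> \oo] --> reim b (V i j).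
Proof.
move=> UV_cvg; apply/subr_cvg0/norm_cvg0P.
apply: (squeeze_cvgr0 (w := fun N => mxnorm1 (U N - V))) => // N.
by have := reim_le_mxnorm1 b (U N - V) i j; rewrite normr_ge0 -reimB !mxE.
Qed.

Lemma mxnorm1_cvg_trans (U V : nat -> 'M[R[i]]_(m, n)) W :
  mxnorm1 (U N - V N) @[N --> \oo] --> 0 -> mxnorm1 (V N - W) @[N --> \oo] --> 0 ->
  mxnorm1 (U N - W) @[N --> \oo] --> 0.
Proof.
move=> UV_cvg VW_cvg.
apply: (squeeze_cvgr0 (w := fun N => mxnorm1 (U N - V N) + mxnorm1 (V N - W))) => [N|].
  have -> : U N - W = (U N - V N) + (V N - W) by rewrite addrA subrK.
  by rewrite mxnorm1_ge0 mxnorm1D.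
by rewrite -(addr0 0); exact: cvgD.
Qed.

End MatrixNorm.

Lemma mxnorm1_linear_le m n p q (L : {linear 'M[R[i]]_(m, n) -> 'M[R[i]]_(p, q)}) :
  exists2 M, 0 <= M & forall X, mxnorm1 (L X) <= M * mxnorm1 X.
Proof.
pose M := \sum_i \sum_j mxnorm1 (L (delta_mx i j)).
exists M => [|X].
  by rewrite sumr_ge0 // => i _; rewrite sumr_ge0 // => j _; exact: mxnorm1_ge0.
have -> : M * mxnorm1 X = \sum_i \sum_j cnorm1 (X i j) * M.
  by rewrite mulrC mulr_suml; under eq_bigr do rewrite mulr_suml.
rewrite {1}(matrix_sum_delta X) linear_sum.
apply: le_trans (mxnorm1_sum _ _) _; apply: ler_sum => i _; rewrite linear_sum.
apply: le_trans (mxnorm1_sum _ _) _; apply: ler_sum => j _; rewrite linearZ.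
apply: le_trans (mxnorm1Z _ _) _; rewrite ler_wpM2l ?cnorm1_ge0 //.
by apply: (@le_sum2_term _ _ (fun i j => mxnorm1 (L (delta_mx i j)))) => ? ?; exact: mxnorm1_ge0.
Qed.

End ComplexMatrices.

Section LindbladianLinear.
Variables (R : realType) (d : nat).
Implicit Types (A B X Y : 'M[R[i]]_d) (a : R[i]).

Lemma commutator_linear A a X Y :
  A *m (a *: X + Y) - (a *: X + Y) *m A = a *: (A *m X - X *m A) + (A *m Y - Y *m A).
Proof. by rewrite mulmxDr mulmxDl -scalemxAr -scalemxAl scalerBr opprD addrACA. Qed.

Lemma dissipator_linear B a X Y :
  B *m (a *: X + Y) *m adjm B
    - 2^-1 *: (adjm B *m B *m (a *: X + Y) + (a *: X + Y) *m (adjm B *m B)) =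
  a *: (B *m X *m adjm B - 2^-1 *: (adjm B *m B *m X + X *m (adjm B *m B)))
  + (B *m Y *m adjm B - 2^-1 *: (adjm B *m B *m Y + Y *m (adjm B *m B))).
Proof.
rewrite !(mulmxDr, mulmxDl) -!(scalemxAr, scalemxAl) addrACA -scalerDr (scalerDr 2^-1).
by rewrite scalerA mulrC -scalerA scalerBr opprD addrACA.
Qed.

Lemma lindbladian_linear (L : 'M[R[i]]_d -> 'M[R[i]]_d) : is_lindbladian L -> linear L.
Proof.
case=> H [_ [k [g [Ls [_ L_E]]]]] a X Y.
rewrite !L_E commutator_linear [in RHS]scalerDr [in RHS]scaler_sumr.
rewrite [in RHS]addrACA -big_split /=.
congr (_ + _); first by rewrite scalerDr scalerA (mulrC (- 'i)) -scalerA.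
apply: eq_bigr => j _.
by rewrite dissipator_linear scalerDr scalerA (mulrC (g j)%:C) -scalerA.
Qed.

End LindbladianLinear.

Section SeriesFacts.
Variable R : realType.

Lemma exp_coeffD (a b : R) m :
  exp_coeff (a + b) m = \sum_(j < m.+1) exp_coeff a j * exp_coeff b (m - j)%N.
Proof.
rewrite /exp_coeff /= addrC exprDn mulr_suml; apply: eq_bigr => j _.
have /(congr1 (GRing.natmul (1 : R))) := bin_fact (leq_ord j); rewrite !natrM => <-.
have fact_neq0 n : n`!%:R != 0 :> R by rewrite pnatr_eq0 -lt0n fact_gt0.
rewrite -mulr_natr; field.
by rewrite !fact_neq0 pnatr_eq0 -lt0n bin_gt0 leq_ord.
Qed.

Lemma exp_coeff_normM (x y : R) k : `|exp_coeff x k| * y ^+ k = exp_coeff (`|x| * y) k.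
Proof. by rewrite /exp_coeff /= normrM normfV normrX normr_nat exprMn mulrAC. Qed.

Lemma exp_series_le (c : R) N : 0 <= c -> \sum_(k < N) exp_coeff c k <= expR c.
Proof.
move=> c_ge0; rewrite (_ : \sum_(k < N) _ = series (exp_coeff c) N); last by rewrite seriesEord.
apply: nondecreasing_cvgn_le; last exact: is_cvg_series_exp_coeff.
by apply: nondecreasing_series => k _ _; exact: exp_coeff_ge0.
Qed.

Lemma exp_series_cvg (c : R) : \sum_(k < N) exp_coeff c k @[N --> \oo] --> expR c.
Proof.
rewrite (_ : (fun N => _) = series (exp_coeff c)); last by rewrite seriesEord.
exact: is_cvg_series_exp_coeff.
Qed.

End SeriesFacts.

Lemma sum_triangle (V : zmodType) (f : nat -> nat -> V) N :
  \sum_(m < N) \sum_(j < m.+1) f j (m - j)%N = \sum_(j < N) \sum_(k < N - j) f j k.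
Proof.
elim: N => [|N IH]; first by rewrite !big_ord0.
rewrite big_ord_recr /= IH.
under [RHS]eq_bigr => j _ do rewrite subSn ?leq_ord // big_ord_recr.
rewrite big_split /= [X in _ = X + _]big_ord_recr /= subnn big_ord0 addr0.
by congr (_ + _); apply: eq_bigr.
Qed.

Lemma sum_square_sub_triangle (V : zmodType) (f : nat -> nat -> V) N :
  \sum_(j < N) \sum_(k < N) f j k - \sum_(m < N) \sum_(j < m.+1) f j (m - j)%N =
  \sum_(j < N) \sum_(N - j <= k < N) f j k.
Proof.
rewrite sum_triangle -sumrB; apply: eq_bigr => j _.
rewrite -!(big_mkord xpredT) (big_cat_nat (leq0n (N - j)) (leq_subr j N)) /=.
by rewrite addrC addrK.
Qed.

Definition expL_series (R : realType) d (t : R) (L : 'M[R[i]]_d -> 'M[R[i]]_d)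
    (X : 'M[R[i]]_d) (N : nat) : 'M[R[i]]_d :=
  \sum_(k < N) (exp_coeff t k)%:C *: iter k L X.

Section ExpSeries.
Variables (R : realType) (d : nat) (L : {linear 'M[R[i]]_d -> 'M[R[i]]_d}) (M : R).
Hypotheses (M_ge0 : 0 <= M) (L_le : forall X, mxnorm1 (L X) <= M * mxnorm1 X).
Implicit Types (t x : R) (X Y : 'M[R[i]]_d).

Lemma iter_linear k : linear (iter k L).
Proof. by elim: k => [|k IH] a X Y //=; rewrite IH linearP. Qed.

HB.instance Definition _ k := GRing.isLinear.Build _ _ _ _ (iter k L) (iter_linear k).

Lemma mxnorm1_iter_le k X : mxnorm1 (iter k L X) <= M ^+ k * mxnorm1 X.
Proof.
elim: k => [|k IH]; first by rewrite mul1r.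
by rewrite /= exprS -mulrA (le_trans (L_le _)) // ler_wpM2l.
Qed.

Lemma mxnorm1_expL_term_le t k X :
  mxnorm1 ((exp_coeff t k)%:C *: iter k L X) <= mxnorm1 X * exp_coeff (`|t| * M) k.
Proof.
apply: le_trans (mxnorm1Z _ _) _; rewrite cnorm1_real -exp_coeff_normM.
apply: le_trans (ler_wpM2l (normr_ge0 _) (mxnorm1_iter_le k X)) _.
by rewrite mulrA mulrC.
Qed.

Lemma mxnorm1_expL_series_le t X N :
  mxnorm1 (expL_series t L X N) <= mxnorm1 X * expR (`|t| * M).
Proof.
apply: le_trans (mxnorm1_sum _ _) _.
apply: le_trans (ler_sum _ (fun k _ => mxnorm1_expL_term_le t _ X)) _.
by rewrite -mulr_sumr ler_wpM2l ?mxnorm1_ge0 // exp_series_le // mulr_ge0.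
Qed.

Lemma reim_expL_series_cvg b t X i j :
  reim b (expL_series t L X N i j) @[N --> \oo] --> reim b (expL t L X i j).
Proof.
have -> : reim b (expL t L X i j) = limn (fun N => reim b (expL_series t L X N i j)).
  by case: b; rewrite mxE.
rewrite (_ : (fun N => _) = series (fun k => reim b (((exp_coeff t k)%:C *: iter k L X) i j))).
  2: by rewrite seriesEord; apply/funext => N; rewrite summxE reim_sum.
apply: normed_cvg; apply: (series_le_cvg (v_ := mxnorm1 X *: exp_coeff (`|t| * M))) => [k|k|k|] /=.
- exact: normr_ge0.
- by rewrite mulr_ge0 ?mxnorm1_ge0 // exp_coeff_ge0 // mulr_ge0.
- exact: le_trans (reim_le_mxnorm1 _ _ _ _) (mxnorm1_expL_term_le _ _ _).
- exact: is_cvg_seriesZ (is_cvg_series_exp_coeff _).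
Qed.

Lemma expL_series_cvg t X : mxnorm1 (expL_series t L X N - expL t L X) @[N --> \oo] --> 0.
Proof.
apply: mxnorm1_cvg0 => b i j; under eq_cvg do rewrite 2!mxE reimB.
by apply/subr_cvg0; exact: reim_expL_series_cvg.
Qed.

Lemma expL_seriesB t X Y N :
  expL_series t L (X - Y) N = expL_series t L X N - expL_series t L Y N.
Proof. by rewrite -sumrB; apply: eq_bigr => k _; rewrite linearB scalerBr. Qed.

Lemma expL_series_comp x t X N :
  expL_series x L (expL_series t L X N) N =
  \sum_(j < N) \sum_(k < N) (exp_coeff x j * exp_coeff t k)%:C *: iter (j + k)%N L X.
Proof.
apply: eq_bigr => j _; rewrite linear_sum scaler_sumr; apply: eq_bigr => k _.
by rewrite linearZ scalerA -rmorphM iterD.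
Qed.

Lemma expL_seriesD x t X N :
  expL_series (t + x) L X N =
  \sum_(m < N) \sum_(j < m.+1)
    (exp_coeff x j * exp_coeff t (m - j)%N)%:C *: iter (j + (m - j))%N L X.
Proof.
apply: eq_bigr => m _; rewrite addrC exp_coeffD rmorph_sum scaler_suml.
by apply: eq_bigr => j _; rewrite subnKC // -ltnS.
Qed.

(* The square minus the triangle of a Cauchy product, dominated by the same
   defect for the scalar series of [expR (`|x| * M)] and [expR (`|t| * M)]. *)
Lemma mxnorm1_expL_series_comp_sub_le x t X N :
  mxnorm1 (expL_series x L (expL_series t L X N) N - expL_series (t + x) L X N) <=
  mxnorm1 X * ((\sum_(j < N) exp_coeff (`|x| * M) j) * (\sum_(k < N) exp_coeff (`|t| * M) k)
               - \sum_(k < N) exp_coeff (`|x| * M + `|t| * M) k).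
Proof.
pose e j k := exp_coeff (`|x| * M) j * exp_coeff (`|t| * M) k.
have -> : \sum_(k < N) exp_coeff (`|x| * M + `|t| * M) k =
    \sum_(m < N) \sum_(j < m.+1) e j (m - j)%N.
  by apply: eq_bigr => m _; exact: exp_coeffD.
rewrite [X in _ * (X - _)]mulr_suml; under [X in _ * (X - _)]eq_bigr do rewrite mulr_sumr.
rewrite expL_series_comp expL_seriesD sum_square_sub_triangle mulr_sumr.
rewrite (sum_square_sub_triangle
  (fun j k => (exp_coeff x j * exp_coeff t k)%:C *: iter (j + k)%N L X)).
apply: le_trans (mxnorm1_sum _ _) _; apply: ler_sum => j _; rewrite mulr_sumr.
apply: le_trans (mxnorm1_sum _ _) _; apply: ler_sum => k _.
apply: le_trans (mxnorm1Z _ _) _; rewrite cnorm1_real normrM.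
apply: le_trans (ler_wpM2l (mulr_ge0 (normr_ge0 _) (normr_ge0 _)) (mxnorm1_iter_le _ _)) _.
by rewrite /e -!exp_coeff_normM exprD le_eqVlt; apply/orP; left; apply/eqP; ring.
Qed.

(* The semigroup law [expL (t + x) = expL x \o expL t], as a limit of partial
   sums: the defect above tends to [expR a * expR b - expR (a + b) = 0]. *)
Lemma expL_series_shift_cvg t x X :
  mxnorm1 (expL_series x L (expL t L X) N - expL (t + x) L X) @[N --> \oo] --> 0.
Proof.
apply: (mxnorm1_cvg_trans (V := fun N => expL_series x L (expL_series t L X N) N)).
  apply: (squeeze_cvgr0 (w := fun N =>
    mxnorm1 (expL_series t L X N - expL t L X) * expR (`|x| * M))) => [N|].
    by rewrite mxnorm1_ge0 -expL_seriesB mxnorm1B mxnorm1_expL_series_le.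
  by rewrite -[X in _ --> X](mul0r (expR (`|x| * M))); apply: cvgMl; exact: expL_series_cvg.
apply: (mxnorm1_cvg_trans (V := expL_series (t + x) L X)); last exact: expL_series_cvg.
apply: (squeeze_cvgr0 (w := fun N => mxnorm1 X *
  ((\sum_(j < N) exp_coeff (`|x| * M) j) * (\sum_(k < N) exp_coeff (`|t| * M) k)
   - \sum_(k < N) exp_coeff (`|x| * M + `|t| * M) k))) => [N|].
  by rewrite mxnorm1_ge0 mxnorm1_expL_series_comp_sub_le.
rewrite [X in _ --> X](_ : 0 = mxnorm1 X *
    (expR (`|x| * M) * expR (`|t| * M) - expR (`|x| * M + `|t| * M))); last first.
  by rewrite expRD subrr mulr0.
by apply: cvgMr; apply: cvgB; [apply: cvgM|]; exact: exp_series_cvg.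
Qed.

Lemma expL_real_analytic X i j : real_analytic_cplx (fun t => expL t L X i j).
Proof.
move=> b t0 _; exists 1; split => //.
exists (fun k => reim b (iter k L (expL t0 L X) i j) / k`!%:R) => t _ _ /=.
suff expand x : \sum_(k < N) reim b (iter k L (expL t0 L X) i j) / k`!%:R * x ^+ k
    @[N --> \oo] --> reim b (expL (t0 + x) L X i j).
  by have := expand (t - t0); rewrite subrKC.
have -> : (fun N => \sum_(k < N) reim b (iter k L (expL t0 L X) i j) / k`!%:R * x ^+ k) =
    (fun N => reim b (expL_series x L (expL t0 L X) N i j)).
  apply/funext => N; rewrite summxE reim_sum; apply: eq_bigr => k _.
  by rewrite mxE reim_realMl /exp_coeff /=; ring.
exact/reim_cvg_mxnorm1/expL_series_shift_cvg.
Qed.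

End ExpSeries.

Lemma tensmx_linear (R : comPzRingType) m n p q (A : 'M[R]_(m, n)) :
  linear (@tensmx R m n p q A).
Proof. by move=> a B1 B2; apply/matrixP => i j; rewrite !mxE mulrDr mulrCA. Qed.

HB.instance Definition _ (R : comPzRingType) m n p q (A : 'M[R]_(m, n)) :=
  GRing.isLinear.Build _ _ _ _ (@tensmx R m n p q A) (tensmx_linear A).

Lemma linear_tensmx_real_analytic (R : realType) m n p q r s
    (P : {linear 'M[R[i]]_(m * p, n * q) -> 'M[R[i]]_(r, s)})
    (A : 'M[R[i]]_(m, n)) (F : R -> 'M[R[i]]_(p, q)) i j :
  mx_real_analytic_on_nonneg F -> real_analytic_cplx (fun t => P (A *t F t) i j).
Proof.
move=> Fa; have -> : (fun t => P (A *t F t) i j) =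
    (fun t => \sum_a \sum_b F t a b * P (A *t delta_mx a b) i j).
  apply/funext => t; rewrite {1}(matrix_sum_delta (F t)) !linear_sum summxE.
  by apply: eq_bigr => a _; rewrite !linear_sum summxE; apply: eq_bigr => b _; rewrite !linearZ mxE.
apply: real_analytic_cplx_sum => a; apply: real_analytic_cplx_sum => b.
exact/real_analytic_cplxMr/mx_real_analytic_entry.
Qed.

Theorem lemma14 (R : realType) (d p : nat)
  (L : 'M[R[i]]_d -> 'M[R[i]]_d)
  (pi : R -> 'M[R[i]]_p)
  (P : {linear 'M[R[i]]_(d * p) -> 'M[R[i]]_d})
  (T : R) :
  is_lindbladian L ->
  (forall t : R, 0 <= t -> density (pi t)) ->
  mx_real_analytic_on_nonneg pi ->
  0 < T ->
  (forall t : R, 0 <= t -> t <= T ->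
     forall rho : 'M[R[i]]_d, P (rho *t pi t) = expL t L rho) ->
  forall t : R, T <= t ->
    forall rho : 'M[R[i]]_d, P (rho *t pi t) = expL t L rho.
Proof.
move=> L_lind _ pi_an T_gt0 agree t Tt rho.
pose Ll : {linear 'M[R[i]]_d -> 'M[R[i]]_d} :=
  HB.pack L (GRing.isLinear.Build _ _ _ _ L (lindbladian_linear L_lind)).
have [M M_ge0 L_le] := mxnorm1_linear_le Ll.
apply/matrixP => i j; apply/eqP; rewrite -subr_eq0; apply/eqP.
have diff_an : real_analytic_cplx (fun t => P (rho *t pi t) i j - expL t L rho i j).
  exact: real_analytic_cplxB (linear_tensmx_real_analytic P rho i j pi_an)
                             (expL_real_analytic M_ge0 L_le rho i j).
apply: (real_analytic_cplx_eq0 diff_an T_gt0) => [u u_ge0 uT|]; first by rewrite agree ?subrr.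
exact: le_trans (ltW T_gt0) Tt.
Qed.
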